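(* Let $\mathscr{I}_1\subseteq(0,1)$ and $\mathscr{I}_2\subseteq\mathbb{R}$, and let $f_\nu^\alpha:\mathbb{R}\to\mathbb{R}$ ($\nu\in\mathscr{I}_1$, $\alpha\in\mathscr{I}_2$) be even continuous functions and $\vartheta_\nu^\alpha\in[0,\infty)$ be numbers such that for some $C>0$, $\|f_\nu^\alpha\|_{L^\infty}\le C$ and $\vartheta_\nu^\alpha\le C\nu^2$ for all $\nu,\alpha$. Fix $q_*>0$. (i) Define \[ F_\nu^\alpha(X):=\int_{X+\vartheta_\nu^\alpha\tanh(q_*X)}^{X+\nu+\vartheta_\nu^\alpha\tanh(q_*X+q_*\nu)}f_\nu^\alpha(s)\,ds-\int_{X+\vartheta_\nu^\alpha\tanh(q_*X)}^{X+\nu+\vartheta_\nu^\alpha\tanh(q_*X)}f_\nu^\alpha(s)\,ds . \] Then $\sup_{\nu\in\mathscr{I}_1,\alpha\in\mathscr{I}_2,X\in\mathbb{R}}\nu^{-3}e^{2q_*|X|}|F_\nu^\alpha(X)|<\infty$. (ii) Suppose $0<q<q_*$ and $\sup_{\nu\in\mathscr{I}_1,\alpha\in\mathscr{I}_2,X\in\mathbb{R}}e^{q|X|}|f_\nu^\alpha(X)|<\infty$. Then there exist $L_\nu^{\alpha,\int}\in\mathbb{R}$ such that \[ \sup_{\nu\in\mathscr{I}_1,\alpha\in\mathscr{I}_2}\left[\left(\sup_{X\in\mathbb{R}}e^{q|X|}\left|\int_0^Xf_\nu^\alpha(s)\,ds-L_\nu^{\alpha,\int}\tanh\left(\frac{q_*X}{2}\right)\right|\right)+|L_\nu^{\alpha,\int}|\right]<\infty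 . \] *)

(* concrete reals R, Coquelicot's RInt for integrals.
   The functions f are continuous, so the (Riemann) integral RInt is the
   ordinary integral of the paper. *)
From Stdlib Require Import Reals Lra.
From Coquelicot Require Import Coquelicot.
Open Scope R_scope.

Definition F_B3 (g : R -> R) (theta qs nu X : R) : R :=
  RInt g (X + theta * tanh (qs * X)) (X + nu + theta * tanh (qs * X + qs * nu))
  - RInt g (X + theta * tanh (qs * X)) (X + nu + theta * tanh (qs * X)).

(* (i) By Chasles, F is the integral of f over an interval of length
   theta (tanh (q_* X + q_* nu) - tanh (q_* X)) >= 0, and
   tanh (y + h) - tanh y <= 4 h e^{2h} e^{-2|y|}; with theta <= C nu^2 and |f| <= C
   this gives |F| <= 4 C^2 q_* e^{2 q_*} nu^3 e^{-2 q_* |X|}.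
   (ii) Take L = int_0^oo f, which exists because |int_X^Y f| <= (K/q) e^{-qX}
   for 0 <= X <= Y.  For X >= 0 split
   int_0^X f - L tanh (q_* X / 2) = (int_0^X f - L) + L (1 - tanh (q_* X / 2)):
   the first term is at most (K/q) e^{-qX}, the second at most
   2 (K/q) e^{-q_* X} <= 2 (K/q) e^{-qX}.  Negative X follow by symmetry, since
   f is even and tanh is odd. *)

From Stdlib Require Import Reals Lra.
From Coquelicot Require Import Coquelicot.
Open Scope R_scope.

Lemma exp_le_compat x y : x <= y -> exp x <= exp y.
Proof.
  intros [Hlt | ->]; [left; apply exp_increasing; exact Hlt | right; reflexivity].
Qed.

Lemma exp_sub1_le x : exp x - 1 <= x * exp x.
Proof.
  assert (H := exp_ineq1_le (- x)). rewrite exp_Ropp in H.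
  assert (Hx := exp_pos x).
  assert (H1 : (1 - x) * exp x <= 1).
  { replace 1 with (/ exp x * exp x) at 2 by (field; lra).
    apply Rmult_le_compat_r; lra. }
  lra.
Qed.

Lemma le_exp_opp_mul a y K : exp a * y <= K -> y <= K * exp (- a).
Proof.
  intros H. rewrite exp_Ropp. assert (He := exp_pos a).
  apply Rmult_le_reg_l with (exp a); [exact He |].
  replace (exp a * (K * / exp a)) with K by (field; lra). exact H.
Qed.

Lemma tanh_opp y : tanh (- y) = - tanh y.
Proof.
  unfold tanh, sinh, cosh. rewrite Ropp_involutive.
  assert (0 < exp y) by apply exp_pos.
  assert (0 < exp (- y)) by apply exp_pos.
  field. lra.
Qed.

Lemma tanh_eq y : tanh y = 1 - 2 / (exp (2 * y) + 1).
Proof.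
  unfold tanh, sinh, cosh.
  replace (2 * y) with (y + y) by ring. rewrite exp_plus, exp_Ropp.
  assert (0 < exp y) by apply exp_pos.
  field. split; nra.
Qed.

Lemma one_sub_tanh_le y : 0 <= y -> 0 <= 1 - tanh y <= 2 * exp (- (2 * y)).
Proof.
  intros Hy. rewrite tanh_eq, exp_Ropp.
  assert (HE : exp 0 <= exp (2 * y)) by (apply exp_le_compat; lra).
  rewrite exp_0 in HE.
  replace (1 - (1 - 2 / (exp (2 * y) + 1))) with (2 / (exp (2 * y) + 1)) by ring.
  split.
  - apply Rdiv_le_0_compat; lra.
  - apply Rmult_le_compat_l; [lra |]. apply Rinv_le_contravar; lra.
Qed.

Lemma tanh_add_sub_le y h : 0 <= h ->
  0 <= tanh (y + h) - tanh y <= 4 * h * exp (2 * h) * exp (- 2 * Rabs y).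
Proof.
  intros Hh. rewrite !tanh_eq.
  replace (2 * (y + h)) with (2 * y + 2 * h) by ring. rewrite exp_plus.
  set (E := exp (2 * y)). set (D := exp (2 * h)).
  assert (HE : 0 < E) by apply exp_pos.
  assert (HD : 1 <= D) by (rewrite <- exp_0; apply exp_le_compat; lra).
  assert (HD1 : D - 1 <= 2 * h * D) by apply exp_sub1_le.
  assert (Hincr : 1 - 2 / (E * D + 1) - (1 - 2 / (E + 1))
                  = 2 * (D - 1) * (E / ((E + 1) * (E * D + 1)))).
  { field. split; nra. }
  (* [E / ((E + 1) * (E * D + 1)) <= E / (E + 1)^2 <= min E (1 / E)] *)
  assert (Hpeak : E / ((E + 1) * (E * D + 1)) <= exp (- 2 * Rabs y)).
  { set (w := exp (- 2 * Rabs y)).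
    assert (Hw : w * E = 1 \/ w = E).
    { unfold w, E. destruct (Rle_or_lt 0 y) as [Hy | Hy].
      - left. rewrite Rabs_right, <- exp_plus by lra.
        replace (- 2 * y + 2 * y) with 0 by ring. apply exp_0.
      - right. rewrite Rabs_left by lra. f_equal. ring. }
    assert (Hw0 : 0 < w) by apply exp_pos.
    assert (HP : 0 < (E + 1) * (E * D + 1)) by nra.
    unfold Rdiv. apply Rmult_le_reg_r with ((E + 1) * (E * D + 1)); [exact HP |].
    rewrite Rmult_assoc, Rinv_l, Rmult_1_r by lra.
    destruct Hw as [Hw | ->].
    - apply Rle_trans with (w * (E * E)).
      + right. replace (w * (E * E)) with (w * E * E) by ring. rewrite Hw. ring.
      + apply Rmult_le_compat_l; nra.
    - rewrite <- (Rmult_1_r E) at 1. apply Rmult_le_compat_l; nra. }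
  rewrite Hincr. split.
  - apply Rmult_le_pos; [lra |]. apply Rdiv_le_0_compat; nra.
  - assert (0 <= E / ((E + 1) * (E * D + 1))) by (apply Rdiv_le_0_compat; nra).
    assert (0 < exp (- 2 * Rabs y)) by apply exp_pos.
    apply Rle_trans with (2 * (D - 1) * exp (- 2 * Rabs y)).
    + apply Rmult_le_compat_l; lra.
    + apply Rmult_le_compat_r; lra.
Qed.

Lemma ex_RInt_continuous_R (g : R -> R) a b :
  (forall s, continuous g s) -> ex_RInt g a b.
Proof. intros Hc. apply (@ex_RInt_continuous R_CompleteNormedModule); auto. Qed.

Lemma RInt_0_opp_even (g : R -> R) X :
  (forall s, continuous g s) -> (forall s, g (- s) = g s) ->
  RInt g 0 (- X) = - RInt g 0 X.
Proof.
  intros Hc He.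
  assert (H := RInt_comp_lin g (-1) 0 0 X (ex_RInt_continuous_R g _ _ Hc)).
  replace (-1 * 0 + 0) with 0 in H by ring.
  replace (-1 * X + 0) with (- X) in H by ring.
  rewrite <- H, (RInt_ext _ (fun y => opp (g y))).
  - rewrite (RInt_opp (V := R_CompleteNormedModule)) by (apply ex_RInt_continuous_R; exact Hc).
    reflexivity.
  - intros x _. unfold scal, opp; simpl. unfold mult; simpl.
    replace (-1 * x + 0) with (- x) by ring. rewrite He. ring.
Qed.

Lemma is_lim_abs_sub_le (h : R -> R) (x : Rbar) (l c b : R) :
  Rbar_locally' x (fun y => Rabs (h y - c) <= b) -> is_lim h x l -> Rabs (l - c) <= b.
Proof.
  intros Hev Hh. apply Rabs_le_between'.
  assert (Hlo : Rbar_le (c - b) l).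
  { apply (is_lim_le_loc (fun _ => c - b) h x); [| apply is_lim_const | exact Hh].
    apply (filter_imp _ _ (fun y Hy => proj1 (proj1 (Rabs_le_between' _ _ _) Hy)) Hev). }
  assert (Hhi : Rbar_le l (c + b)).
  { apply (is_lim_le_loc h (fun _ => c + b) x); [| exact Hh | apply is_lim_const].
    apply (filter_imp _ _ (fun y Hy => proj2 (proj1 (Rabs_le_between' _ _ _) Hy)) Hev). }
  split; assumption.
Qed.

Lemma abs_F_B3_le (g : R -> R) C th qs nu X :
  (forall s, continuous g s) -> (forall s, Rabs (g s) <= C) ->
  0 <= th -> 0 <= qs * nu ->
  Rabs (F_B3 g th qs nu X) <= C * th * (tanh (qs * X + qs * nu) - tanh (qs * X)).
Proof.
  intros Hc Hb Hth Hh. unfold F_B3.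
  set (lo := X + th * tanh (qs * X)).
  set (a := X + nu + th * tanh (qs * X)).
  set (b := X + nu + th * tanh (qs * X + qs * nu)).
  assert (Hab : b - a = th * (tanh (qs * X + qs * nu) - tanh (qs * X))) by (unfold a, b; ring).
  assert (Hd := proj1 (tanh_add_sub_le (qs * X) (qs * nu) Hh)).
  assert (HF : RInt g lo b - RInt g lo a = RInt g a b).
  { rewrite <- (RInt_Chasles g lo a b) by (apply ex_RInt_continuous_R; exact Hc).
    unfold plus; simpl. ring. }
  rewrite HF.
  eapply Rle_trans.
  - apply abs_RInt_le_const; [nra | apply ex_RInt_continuous_R; exact Hc | intros; apply Hb].
  - rewrite Hab. right. ring.
Qed.

Lemma F_B3_bound (g : R -> R) C th qs nu X :
  (forall s, continuous g s) -> (forall s, Rabs (g s) <= C) ->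
  0 <= th <= C * nu ^ 2 -> 0 < nu <= 1 -> 0 < qs ->
  / nu ^ 3 * exp (2 * qs * Rabs X) * Rabs (F_B3 g th qs nu X)
    <= C * C * (4 * qs * exp (2 * qs)).
Proof.
  intros Hc Hb Hth Hnu Hqs.
  assert (HC : 0 <= C) by (apply Rle_trans with (Rabs (g 0)); [apply Rabs_pos | apply Hb]).
  set (d := tanh (qs * X + qs * nu) - tanh (qs * X)).
  assert (HF := abs_F_B3_le g C th qs nu X Hc Hb (proj1 Hth) ltac:(nra)).
  fold d in HF.
  destruct (tanh_add_sub_le (qs * X) (qs * nu)) as [Hd0 Hd]; [nra |]. fold d in Hd0, Hd.
  rewrite Rabs_mult, (Rabs_right qs) in Hd by lra.
  set (e := exp (2 * qs * Rabs X)).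
  assert (Hee : e * exp (- 2 * (qs * Rabs X)) = 1).
  { unfold e. rewrite <- exp_plus. replace (2 * qs * Rabs X + - 2 * (qs * Rabs X)) with 0 by ring.
    apply exp_0. }
  assert (He : 0 < e) by apply exp_pos.
  assert (Hn3 : 0 < nu ^ 3) by (apply pow_lt; lra).
  assert (Hexp : exp (2 * (qs * nu)) <= exp (2 * qs)) by (apply exp_le_compat; nra).
  assert (Hed : e * d <= 4 * qs * nu * exp (2 * qs)).
  { apply Rle_trans with (e * (4 * (qs * nu) * exp (2 * qs) * exp (- 2 * (qs * Rabs X)))).
    - apply Rmult_le_compat_l; [lra |]. eapply Rle_trans; [exact Hd |].
      apply Rmult_le_compat_r; [left; apply exp_pos |].
      apply Rmult_le_compat_l; nra.
    - right. transitivity (4 * qs * nu * exp (2 * qs) * (e * exp (- 2 * (qs * Rabs X)))); [ring |].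
      rewrite Hee. ring. }
  apply Rle_trans with (/ nu ^ 3 * C * th * (e * d)).
  - replace (/ nu ^ 3 * C * th * (e * d)) with (/ nu ^ 3 * e * (C * th * d)) by ring.
    apply Rmult_le_compat_l; [| exact HF].
    apply Rmult_le_pos; [left; apply Rinv_0_lt_compat |]; lra.
  - apply Rle_trans with (/ nu ^ 3 * C * (C * nu ^ 2) * (4 * qs * nu * exp (2 * qs))).
    + assert (0 < / nu ^ 3) by (apply Rinv_0_lt_compat; lra).
      apply Rmult_le_compat.
      * apply Rmult_le_pos; [apply Rmult_le_pos |]; lra.
      * apply Rmult_le_pos; lra.
      * apply Rmult_le_compat_l; [apply Rmult_le_pos |]; lra.
      * exact Hed.
    + right. field. lra.
Qed.

Definition RInt_0_pinfty (g : R -> R) : R := real (Lim (RInt g 0) p_infty).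

Section ExponentialDecay.

Variables (g : R -> R) (K q : R).
Hypothesis q_pos : 0 < q.
Hypothesis g_cont : forall s, continuous g s.
Hypothesis g_decay : forall s, 0 <= s -> Rabs (g s) <= K * exp (- q * s).

Lemma decay_const_ge0 : 0 <= K.
Proof.
  assert (H := g_decay 0 (Rle_refl 0)).
  rewrite Rmult_0_r, exp_0, Rmult_1_r in H.
  apply Rle_trans with (Rabs (g 0)); [apply Rabs_pos | exact H].
Qed.

Lemma abs_RInt_decay_le X Y : 0 <= X <= Y -> Rabs (RInt g X Y) <= K / q * exp (- q * X).
Proof.
  intros HXY.
  assert (Hprim : is_RInt (fun t => K * exp (- q * t)) X Y
                    (K / q * exp (- q * X) - K / q * exp (- q * Y))).
  { replace (K / q * exp (- q * X) - K / q * exp (- q * Y))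
      with (minus (- K / q * exp (- q * Y)) (- K / q * exp (- q * X)))
      by (unfold minus, plus, opp; simpl; field; lra).
    apply (is_RInt_derive (fun t => - K / q * exp (- q * t))).
    - intros x _. auto_derive; [exact I |]. field. lra.
    - intros x _. apply (ex_derive_continuous (fun t => K * exp (- q * t))).
      auto_derive. exact I. }
  assert (HK := decay_const_ge0).
  assert (0 <= K / q * exp (- q * Y)).
  { apply Rmult_le_pos; [apply Rdiv_le_0_compat; lra | left; apply exp_pos]. }
  eapply Rle_trans; [apply abs_RInt_le; [lra | apply ex_RInt_continuous_R; exact g_cont] |].
  eapply Rle_trans.
  - apply RInt_le; [lra | | eexists; exact Hprim | intros x Hx; apply g_decay; lra].
    apply ex_RInt_continuous_R. intros s. apply continuous_Rabs_comp, g_cont.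
  - rewrite (is_RInt_unique _ _ _ _ Hprim). lra.
Qed.

Lemma abs_RInt_0_sub_le X u v : 0 <= X -> X <= u -> X <= v ->
  Rabs (RInt g 0 v - RInt g 0 u) <= K / q * exp (- q * X).
Proof.
  intros HX Hu Hv.
  assert (Hchasles : RInt g 0 v - RInt g 0 u = RInt g u v).
  { rewrite <- (RInt_Chasles g 0 u v) by (apply ex_RInt_continuous_R; exact g_cont).
    unfold plus; simpl. ring. }
  assert (Hmono : forall a, X <= a -> K / q * exp (- q * a) <= K / q * exp (- q * X)).
  { intros a Ha. apply Rmult_le_compat_l.
    - apply Rdiv_le_0_compat; [apply decay_const_ge0 | lra].
    - apply exp_le_compat. nra. }
  rewrite Hchasles. destruct (Rle_or_lt u v) as [Huv | Hvu].
  - eapply Rle_trans; [apply abs_RInt_decay_le; lra | apply Hmono; lra].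
  - rewrite <- opp_RInt_swap by (apply ex_RInt_continuous_R; exact g_cont).
    unfold opp; simpl. rewrite Rabs_Ropp.
    eapply Rle_trans; [apply abs_RInt_decay_le; lra | apply Hmono; lra].
Qed.

Lemma decay_bound_lt eps : 0 < eps -> K / q * exp (- q * (K / (q * q * eps))) < eps.
Proof.
  intros Heps.
  assert (H1 := exp_ineq1_le (q * (K / (q * q * eps)))).
  replace (q * (K / (q * q * eps))) with (K / (q * eps)) in H1 by (field; lra).
  replace (- q * (K / (q * q * eps))) with (- (K / (q * eps))) by (field; lra).
  rewrite exp_Ropp.
  assert (HE := exp_pos (K / (q * eps))).
  apply Rmult_lt_reg_r with (exp (K / (q * eps))); [exact HE |].
  replace (K / q * / exp (K / (q * eps)) * exp (K / (q * eps))) with (K / q) by (field; lra).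
  assert (eps * (1 + K / (q * eps)) = eps + K / q) by (field; lra).
  nra.
Qed.

Lemma is_lim_RInt_0_pinfty : is_lim (RInt g 0) p_infty (RInt_0_pinfty g).
Proof.
  assert (Hcauchy : exists l : R, filterlim (RInt g 0) (Rbar_locally' p_infty) (locally l)).
  { apply (proj1 (filterlim_locally_cauchy (F := Rbar_locally' p_infty) (RInt g 0))).
    intros eps.
    set (X := K / (q * q * eps)).
    assert (HX : 0 <= X).
    { apply Rdiv_le_0_compat; [apply decay_const_ge0 |].
      apply Rmult_lt_0_compat; [nra | apply cond_pos]. }
    exists (fun Y => X <= Y). split; [exists X; intros; lra |].
    intros u v Hu Hv.
    change (Rabs (RInt g 0 v - RInt g 0 u) < eps).
    eapply Rle_lt_trans; [apply (abs_RInt_0_sub_le X); lra |].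
    apply decay_bound_lt, cond_pos. }
  destruct Hcauchy as [l Hl].
  unfold RInt_0_pinfty. rewrite (is_lim_unique _ _ l Hl). exact Hl.
Qed.

Lemma abs_RInt_0_sub_RInt_0_pinfty_le X : 0 <= X ->
  Rabs (RInt g 0 X - RInt_0_pinfty g) <= K / q * exp (- q * X).
Proof.
  intros HX. rewrite Rabs_minus_sym.
  apply (is_lim_abs_sub_le (RInt g 0) p_infty); [| apply is_lim_RInt_0_pinfty].
  exists X. intros Y HY. apply abs_RInt_0_sub_le; lra.
Qed.

Lemma abs_RInt_0_pinfty_le : Rabs (RInt_0_pinfty g) <= K / q.
Proof.
  assert (H := abs_RInt_0_sub_RInt_0_pinfty_le 0 (Rle_refl 0)).
  rewrite RInt_point, Rmult_0_r, exp_0, Rmult_1_r in H.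
  unfold zero in H; simpl in H. rewrite Rminus_0_l, Rabs_Ropp in H. exact H.
Qed.

Lemma RInt_0_tanh_approx_nonneg qs X : q <= qs -> 0 <= X ->
  exp (q * X) * Rabs (RInt g 0 X - RInt_0_pinfty g * tanh (qs * X / 2)) <= 3 * (K / q).
Proof.
  intros Hqs HX.
  set (L := RInt_0_pinfty g).
  assert (HL := abs_RInt_0_pinfty_le). fold L in HL.
  assert (Htail := abs_RInt_0_sub_RInt_0_pinfty_le X HX). fold L in Htail.
  destruct (one_sub_tanh_le (qs * X / 2)) as [Ht0 Ht]; [nra |].
  replace (- (2 * (qs * X / 2))) with (- qs * X) in Ht by field.
  assert (HKq : 0 <= K / q) by (apply Rdiv_le_0_compat; [apply decay_const_ge0 | lra]).
  assert (Hsplit : Rabs (RInt g 0 X - L * tanh (qs * X / 2))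
                   <= K / q * exp (- q * X) + 2 * (K / q) * exp (- qs * X)).
  { replace (RInt g 0 X - L * tanh (qs * X / 2))
      with ((RInt g 0 X - L) + L * (1 - tanh (qs * X / 2))) by ring.
    eapply Rle_trans; [apply Rabs_triang | apply Rplus_le_compat; [exact Htail |]].
    rewrite Rabs_mult, (Rabs_right (1 - _)) by lra.
    replace (2 * (K / q) * exp (- qs * X)) with (K / q * (2 * exp (- qs * X))) by ring.
    apply Rmult_le_compat; [apply Rabs_pos | lra | exact HL | exact Ht]. }
  assert (He1 : exp (q * X) * exp (- q * X) = 1).
  { rewrite <- exp_plus. replace (q * X + - q * X) with 0 by ring. apply exp_0. }
  assert (He2 : exp (q * X) * exp (- qs * X) <= 1).
  { rewrite <- exp_plus, <- exp_0. apply exp_le_compat. nra. }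
  assert (He : 0 < exp (q * X)) by apply exp_pos.
  eapply Rle_trans; [apply Rmult_le_compat_l; [lra | exact Hsplit] |].
  replace (exp (q * X) * (K / q * exp (- q * X) + 2 * (K / q) * exp (- qs * X)))
    with (K / q * (exp (q * X) * exp (- q * X)) + 2 * (K / q) * (exp (q * X) * exp (- qs * X)))
    by ring.
  rewrite He1. nra.
Qed.

Hypothesis g_even : forall s, g (- s) = g s.

Lemma RInt_0_tanh_approx qs X : q <= qs ->
  exp (q * Rabs X) * Rabs (RInt g 0 X - RInt_0_pinfty g * tanh (qs * X / 2)) <= 3 * (K / q).
Proof.
  intros Hqs. destruct (Rle_or_lt 0 X) as [HX | HX].
  - rewrite Rabs_right by lra. apply RInt_0_tanh_approx_nonneg; lra.
  - rewrite Rabs_left by lra.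
    replace X with (- (- X)) at 2 3 by ring.
    rewrite RInt_0_opp_even by assumption.
    replace (qs * - - X / 2) with (- (qs * - X / 2)) by field. rewrite tanh_opp.
    replace (- RInt g 0 (- X) - RInt_0_pinfty g * - tanh (qs * - X / 2))
      with (- (RInt g 0 (- X) - RInt_0_pinfty g * tanh (qs * - X / 2))) by ring.
    rewrite Rabs_Ropp. apply RInt_0_tanh_approx_nonneg; lra.
Qed.

End ExponentialDecay.

Theorem lemmaB3
  (I1 I2 : R -> Prop) (f : R -> R -> R -> R) (theta : R -> R -> R) (qs : R)
  (HI1 : forall nu, I1 nu -> 0 < nu < 1)
  (Heven : forall nu alpha, I1 nu -> I2 alpha -> forall s, f nu alpha (- s) = f nu alpha s)
  (Hcont : forall nu alpha, I1 nu -> I2 alpha -> forall s, continuous (f nu alpha) s)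
  (Htheta0 : forall nu alpha, I1 nu -> I2 alpha -> 0 <= theta nu alpha)
  (HC : exists C, 0 < C /\
     (forall nu alpha, I1 nu -> I2 alpha ->
        (forall s, Rabs (f nu alpha s) <= C) /\ theta nu alpha <= C * nu ^ 2))
  (Hqs : 0 < qs) :
  (* (i) *)
  (exists M, forall nu alpha X, I1 nu -> I2 alpha ->
     / nu ^ 3 * exp (2 * qs * Rabs X) * Rabs (F_B3 (f nu alpha) (theta nu alpha) qs nu X) <= M)
  /\
  (* (ii) *)
  (forall q, 0 < q < qs ->
     (exists K, forall nu alpha X, I1 nu -> I2 alpha ->
        exp (q * Rabs X) * Rabs (f nu alpha X) <= K) ->
     exists L : R -> R -> R, exists M, forall nu alpha, I1 nu -> I2 alpha ->
       forall X, exp (q * Rabs X) *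
                   Rabs (RInt (f nu alpha) 0 X - L nu alpha * tanh (qs * X / 2))
                 + Rabs (L nu alpha) <= M).
Proof.
  split.
  - destruct HC as [C [_ HC]]. exists (C * C * (4 * qs * exp (2 * qs))).
    intros nu alpha X H1 H2. destruct (HC nu alpha H1 H2) as [Hf Hth].
    destruct (HI1 nu H1).
    apply F_B3_bound; [auto | exact Hf | split; auto | lra | exact Hqs].
  - intros q Hq [K HK].
    exists (fun nu alpha => RInt_0_pinfty (f nu alpha)), (3 * (K / q) + K / q).
    intros nu alpha H1 H2 X.
    assert (Hdecay : forall s, 0 <= s -> Rabs (f nu alpha s) <= K * exp (- q * s)).
    { intros s Hs. rewrite <- Ropp_mult_distr_l. apply le_exp_opp_mul.
      rewrite <- (Rabs_right s) at 1 by lra. apply HK; assumption. }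
    apply Rplus_le_compat.
    + apply (RInt_0_tanh_approx _ K); auto; lra.
    + apply (abs_RInt_0_pinfty_le _ K); auto; lra.
Qed.
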